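(* Let $\iota:B\to A$ be a homomorphism of groups and let $q:A\to B$ satisfy (ZL1), (ZL2), (ZL3). Then $\mathrm{Ker}(q)=\{a\in A: q(a)=1_B\}$ is a complement to $\iota(B)$ in $A$, i.e. $\mathrm{Ker}(q)$ is a subgroup of $A$ with $\iota(B)\cap\mathrm{Ker}(q)=\{1_A\}$ and $\iota(B)\,\mathrm{Ker}(q)=A$.
   Context: For a homomorphism $\iota:B\to A$, conditions on $q:A\to B$: (ZL1) $q(1_A)=1_B$; (ZL2) $q(\iota(b)a)=b\,q(a)$ for all $a\in A,b\in B$; (ZL3) $q(aa')=q(a\,\iota(q(a')))$ for all $a,a'\in A$. These maps constitute $\mathcal Z^1(\mathsf T^l_\iota,(B,m_B))$, the algebra structures on the left $B$-set $B$ for the monad $A\otimes_B-$ induced by $\iota$. For subgroups $U,V$ of $A$, $UV=\{uv:u\in U,v\in V\}$. *)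

Record Grp := MkGrp {
  carrier :> Type;
  gmul : carrier -> carrier -> carrier;
  gone : carrier;
  ginv : carrier -> carrier;
  gmulA : forall x y z, gmul x (gmul y z) = gmul (gmul x y) z;
  gmul1l : forall x, gmul gone x = x;
  gmul1r : forall x, gmul x gone = x;
  gmulVl : forall x, gmul (ginv x) x = gone;
  gmulVr : forall x, gmul x (ginv x) = gone
}.

Arguments gmul {g} _ _.
Arguments gone {g}.
Arguments ginv {g} _.

Definition is_hom (B A : Grp) (f : B -> A) : Prop :=
  forall x y : B, f (gmul x y) = gmul (f x) (f y).

Definition is_subgroup (A : Grp) (S : A -> Prop) : Prop :=
  S gone /\ (forall x y, S x -> S y -> S (gmul x y)) /\ (forall x, S x -> S (ginv x)).

Definition ZL1 (B A : Grp) (q : A -> B) : Prop := q gone = gone.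
Definition ZL2 (B A : Grp) (iota : B -> A) (q : A -> B) : Prop :=
  forall (a : A) (b : B), q (gmul (iota b) a) = gmul b (q a).
Definition ZL3 (B A : Grp) (iota : B -> A) (q : A -> B) : Prop :=
  forall a a' : A, q (gmul a a') = q (gmul a (iota (q a'))).

Definition Kerq (B A : Grp) (q : A -> B) : A -> Prop := fun a => q a = gone.

Definition img (B A : Grp) (iota : B -> A) : A -> Prop := fun a => exists b, iota b = a.

(** The map [q] is a retraction of [iota] ((ZL1) and (ZL2) give [q (iota b) = b]),
    and (ZL3) shows that [q a'] only matters through [iota (q a')], so the kernel
    is closed under products and inverses.  An element [iota b] of the kernel
    satisfies [b = q (iota b) = 1], and every [a] splits as
    [iota (q a) * (iota (q a)^-1 * a)], where the second factor lies in the
    kernel by (ZL2). *)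


Lemma gmulI (G : Grp) (x y z : G) : gmul x y = gmul x z -> y = z.
Proof.
  intro E.
  rewrite <- (gmul1l G y), <- (gmul1l G z), <- (gmulVl G x), <- !gmulA, E.
  reflexivity.
Qed.

Section Homomorphism.

Variables (B A : Grp) (f : B -> A).
Hypothesis f_hom : is_hom B A f.

Lemma hom1 : f gone = gone.
Proof.
  apply (gmulI A (f gone)).
  rewrite <- f_hom, gmul1l, gmul1r.
  reflexivity.
Qed.

Lemma homV (b : B) : f (ginv b) = ginv (f b).
Proof.
  apply (gmulI A (f b)).
  rewrite <- f_hom, !gmulVr.
  exact hom1.
Qed.

End Homomorphism.

Section ZLMap.

Variables (B A : Grp) (iota : B -> A) (q : A -> B).
Hypotheses (iota_hom : is_hom B A iota)
  (q1 : ZL1 B A q) (q_iotaM : ZL2 B A iota q) (q_mul : ZL3 B A iota q).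

Lemma q_iota (b : B) : q (iota b) = b.
Proof. rewrite <- (gmul1r A (iota b)), q_iotaM, q1, gmul1r. reflexivity. Qed.

Lemma Kerq_mul (x y : A) :
  Kerq B A q x -> Kerq B A q y -> Kerq B A q (gmul x y).
Proof.
  unfold Kerq; intros Kx Ky.
  rewrite q_mul, Ky, (hom1 B A iota iota_hom), gmul1r.
  exact Kx.
Qed.

Lemma Kerq_inv (x : A) : Kerq B A q x -> Kerq B A q (ginv x).
Proof.
  unfold Kerq; intro Kx.
  assert (E := q_mul (ginv x) x).
  rewrite gmulVl, Kx, (hom1 B A iota iota_hom), gmul1r in E.
  rewrite <- E.
  exact q1.
Qed.

Lemma Kerq_subgroup : is_subgroup A (Kerq B A q).
Proof.
  split; [exact q1 | split].
  - exact Kerq_mul.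
  - exact Kerq_inv.
Qed.

Lemma img_Kerq_trivial (a : A) : img B A iota a -> Kerq B A q a -> a = gone.
Proof.
  unfold Kerq; intros [b <-] Kb.
  rewrite q_iota in Kb; subst b.
  exact (hom1 B A iota iota_hom).
Qed.

Lemma img_Kerq_decomposition (a : A) :
  img B A iota (iota (q a)) /\ Kerq B A q (gmul (iota (ginv (q a))) a) /\
  a = gmul (iota (q a)) (gmul (iota (ginv (q a))) a).
Proof.
  split; [exists (q a); reflexivity | split].
  - unfold Kerq; rewrite q_iotaM, gmulVl.
    reflexivity.
  - rewrite gmulA, <- iota_hom, gmulVr, (hom1 B A iota iota_hom), gmul1l.
    reflexivity.
Qed.

End ZLMap.

Theorem proposition4p2 (A B : Grp) (iota : B -> A) (q : A -> B) :
  is_hom B A iota ->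
  ZL1 B A q -> ZL2 B A iota q -> ZL3 B A iota q ->
  is_subgroup A (Kerq B A q) /\
  (forall a : A, img B A iota a -> Kerq B A q a -> a = gone) /\
  (forall a : A, exists u v : A,
      img B A iota u /\ Kerq B A q v /\ a = gmul u v).
Proof.
  intros iota_hom q1 q_iotaM q_mul.
  split; [exact (Kerq_subgroup B A iota q iota_hom q1 q_mul) | split].
  - exact (img_Kerq_trivial B A iota q iota_hom q1 q_iotaM).
  - intro a.
    exists (iota (q a)), (gmul (iota (ginv (q a))) a).
    exact (img_Kerq_decomposition B A iota q iota_hom q_iotaM a).
Qed.
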